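(* For any $F\in[0,1)$, any $\alpha\in(0,1]$, any $L_0>0$, and any target transport distance $W>0$, there exist a metric space $(\mathcal{X},d)$, a scoring function $s$ that is $(\alpha,L_0)$-Hölder continuous on $(\mathcal{X},d)$ (i.e. $|s(x)-s(y)|\le L_0 d(x,y)^\alpha$), a base distribution $\mathbb{P}_0$ and a skill-augmented distribution $\mathbb{P}_\pi$ on $\mathcal{X}$ such that: (i) the metric freedom of $s$ under $\mathbb{P}_0$ equals $F$; (ii) $\tilde{\mathcal{W}}_1(\mathbb{P}_\pi,\mathbb{P}_0)=W$; (iii) $\mathrm{Lift}(\pi)\ge\tfrac12 L_0(1-F)\,W$.
   Context: The metric freedom of $s$ under $\mathbb{P}_0$ is $1-r$, where $r$ is the Spearman rank correlation between $U=\tilde d(X,X')$ and $V=|s(X)-s(X')|$ for $X,X'$ i.i.d. $\sim\mathbb{P}_0$, with $\tilde d(x,y)=d(x,y)^\alpha$. $\tilde{\mathcal{W}}_1$ is the Wasserstein-1 distance with respect to $\tilde d$. $\mathrm{Lift}(\pi)=\mathbb{E}_{\mathbb{P}_\pi}[s]-\mathbb{E}_{\mathbb{P}_0}[s]$. *)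

From HB Require Import structures.
From mathcomp Require Import all_boot all_order all_algebra.
From mathcomp Require Import all_classical all_reals all_analysis.
Set Implicit Arguments. Unset Strict Implicit. Unset Printing Implicit Defensive.
Import Order.TTheory GRing.Theory Num.Theory.
Local Open Scope classical_set_scope.
Local Open Scope ring_scope.

Section Defs.
Context {R : realType} {dX : measure_display} {X : measurableType dX}.

Definition is_metric (dist : X -> X -> R) : Prop :=
  [/\ forall x y, 0 <= dist x y,
      forall x y, dist x y = 0 <-> x = y,
      forall x y, dist x y = dist y x &
      forall x y z, dist x z <= dist x y + dist y z].

Definition holder (alpha L0 : R) (dist : X -> X -> R) (s : X -> R) : Prop :=
  forall x y, `|s x - s y| <= L0 * (dist x y `^ alpha).

Definition dtilde (alpha : R) (dist : X -> X -> R) (x y : X) : R :=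
  dist x y `^ alpha.

Definition expect {d} {T : measurableType d} (P : {measure set T -> \bar R})
  (f : T -> R) : R := Rintegral P setT f.

Definition cdf {d} {T : measurableType d} (P : {measure set T -> \bar R})
  (f : T -> R) (t : R) : R := fine (P [set x | f x <= t]).

Definition pearson {d} {T : measurableType d} (P : {measure set T -> \bar R})
  (f g : T -> R) : R :=
  let mf := expect P f in let mg := expect P g in
  expect P (fun x => (f x - mf) * (g x - mg)) /
  Num.sqrt (expect P (fun x => (f x - mf) ^+ 2) *
            expect P (fun x => (g x - mg) ^+ 2)).

Definition spearman {d} {T : measurableType d} (P : {measure set T -> \bar R})
  (f g : T -> R) : R :=
  pearson P (fun x => cdf P f (f x)) (fun x => cdf P g (g x)).

Definition metric_freedom (alpha : R) (dist : X -> X -> R) (s : X -> R)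
  (P0 : probability X R) : R :=
  1 - spearman (P0 \x P0)%E
        (fun z : X * X => dtilde alpha dist z.1 z.2)
        (fun z : X * X => `|s z.1 - s z.2|).

Definition coupling (P Q : probability X R) (g : probability (X * X)%type R)
  : Prop :=
  forall A : set X, measurable A ->
    g (fst @^-1` A) = P A /\ g (snd @^-1` A) = Q A.

Definition wasserstein1 (c : X -> X -> R) (P Q : probability X R) : \bar R :=
  ereal_inf [set (\int[g]_z (c z.1 z.2)%:E)%E
            | g in [set g : probability (X * X)%type R | coupling P Q g]].

Definition skill_lift (s : X -> R) (Ppi P0 : probability X R) : R :=
  expect Ppi s - expect P0 s.

End Defs.

(* Take X = bool * bool, the discrete metric d = k [x <> y] (so that
   d^alpha = K [x <> y] with K = k^alpha), the score s = M 1_{x0} with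
   x0 = (true, true) and M = L0 K, the base distribution
   P0 = Bernoulli(q) (x) Bernoulli(1/2) and the skill distribution delta_{x0}.
   A coupling whose first marginal is delta_{x0} lives on {x0} * X, so the
   transport distance is K P0(x <> x0) = K (1 - q/2), which is W for
   K = W / (1 - q/2); then Lift = M (1 - q/2) = L0 W >= L0 (1 - F) W / 2.
   Under P0 (x) P0 we have U = K 1_A and V = M 1_B, where B (exactly one of
   x, x' is x0) is contained in A (x <> x'). The grades of U and V are
   increasing affine functions of 1_A and 1_B, so the Spearman correlation is
   the phi coefficient of these nested events. It tends to 0 as q -> 0 and
   equals 1 at q = 1; the intermediate value theorem gives q with freedom F. *)

From Pilot Require Import Defs.
From HB Require Import structures.
From mathcomp Require Import all_boot all_order all_algebra.
From mathcomp Require Import all_classical all_reals all_analysis.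
From mathcomp Require Import ring lra.

Set Implicit Arguments.
Unset Strict Implicit.
Unset Printing Implicit Defensive.

Import Order.TTheory GRing.Theory Num.Theory.
Import numFieldTopology.Exports numFieldNormedType.Exports.
Local Open Scope classical_set_scope.
Local Open Scope ring_scope.

Section enumerated_space.
Context d (T : measurableType d) (R : realType) (e : seq T).
Hypotheses (mem_e : forall x, x \in e)
  (measurable_set1 : forall x : T, measurable [set x]).

Lemma measurable_enum (A : set T) : measurable A.
Proof.
have -> : A = \big[setU/set0]_(x <- e | `[< A x >]) [set x].
  apply/seteqP; split => [x Ax|x]; rewrite -bigcup_seq_cond.
    by exists x => //=; rewrite mem_e; exact/asboolP.
  by move=> [y /= /andP[_ /asboolP Ay] ->].
by rewrite big_mkcond; apply: bigsetU_measurable => x _; case: ifP.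
Qed.

Hypothesis e_uniq : uniq e.

Lemma ge0_integral_enum (mu : {measure set T -> \bar R}) (f : T -> \bar R) :
  (forall x, 0 <= f x)%E -> (\int[mu]_x f x = \sum_(x <- e) f x * mu [set x])%E.
Proof.
move=> f0; have eT : [set: T] = \big[setU/set0]_(x <- e) [set x].
  by apply/seteqP; split => x // _; rewrite -bigcup_seq; exists x => //=.
rewrite eT ge0_integral_bigsetU //.
- apply: eq_bigr => x _; rewrite (@eq_integral _ _ _ _ _ (cst (f x))).
    by rewrite integral_cst.
  by move=> y; rewrite inE => ->.
- by move=> x y _ _ [z [/= -> ->]].
- by move=> _ Y _; exact: measurable_enum.
Qed.

Lemma product_measure_diagonal (P Q : probability T R) :
  (P \x Q)%E diagonal = (\sum_(x <- e) Q [set x] * P [set x])%E.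
Proof.
rewrite /product_measure1 /= -ge0_integral_enum //; apply: eq_integral => x _ /=.
by congr (Q _); apply/seteqP; split => y; rewrite xsectionE /diagonal /=.
Qed.

End enumerated_space.

Lemma setX_set1 (T1 T2 : Type) (x : T1) (y : T2) :
  [set x] `*` [set y] = [set (x, y)].
Proof. by apply/seteqP; split => -[a b] /=; [move=> [-> ->]|case=> -> ->]. Qed.

Section product_set1.
Context d1 d2 (T1 : measurableType d1) (T2 : measurableType d2) (R : realType).
Variables (x : T1) (y : T2).
Hypotheses (mx : measurable [set x]) (my : measurable [set y]).

Lemma measurable_set1_pair : measurable [set (x, y)].
Proof. by rewrite -setX_set1; exact: measurableX. Qed.

Lemma product_measure_set1 (P : {measure set T1 -> \bar R})
    (Q : {sigma_finite_measure set T2 -> \bar R}) :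
  (P \x Q)%E [set (x, y)] = (P [set x] * Q [set y])%E.
Proof. by rewrite -setX_set1 product_measure1E. Qed.

End product_set1.

(* [probability_setC] with the product measure itself as head symbol, so that
   it rewrites terms such as [(P \x Q)%E A] directly. *)
Lemma product_probability_setC d1 d2 (T1 : measurableType d1)
    (T2 : measurableType d2) (R : realType) (P : probability T1 R)
    (Q : probability T2 R) (A : set (T1 * T2)%type) :
  measurable A -> (P \x Q)%E (~` A) = (1 - (P \x Q)%E A)%E.
Proof. exact: probability_setC. Qed.

Lemma bernoulli_prob_set1 (R : realType) (p : R) (b : bool) : 0 <= p <= 1 ->
  bernoulli_prob p [set b] = (bernoulli_pmf p b)%:E.
Proof.
move=> p01; rewrite bernoulli_probE // !diracE; case: b.
- by rewrite (@mem_set _ [set true] true) // memNset //= mule1 mule0 adde0.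
- by rewrite (@mem_set _ [set false] false) // memNset //= mule1 mule0 add0e.
Qed.

Lemma integrable_EFinD d (T : measurableType d) (R : realType)
    (mu : {measure set T -> \bar R}) (D : set T) (f g : T -> R) :
  measurable D -> mu.-integrable D (EFin \o f) -> mu.-integrable D (EFin \o g) ->
  mu.-integrable D (EFin \o (fun x => f x + g x)).
Proof.
move=> mD If Ig; have -> : EFin \o (fun x => f x + g x) = (EFin \o f) \+ (EFin \o g).
  by apply/funext => x; rewrite /= EFinD.
exact: integrableD.
Qed.

Section indicator_moments.
Context d (T : measurableType d) (R : realType) (P : probability T R).
Local Notation pr A := (fine (P A)).

Lemma integrable_scaled_indic (a : R) (A : set T) : measurable A ->
  P.-integrable setT (EFin \o (fun x => a * \1_A x)).
Proof.
move=> mA; have -> : EFin \o (fun x => a * \1_A x) = (fun x => (a%:E * (\1_A x)%:E)%E).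
  by apply/funext => x; rewrite /= EFinM.
exact/integrableZl/integrable_indic.
Qed.

Lemma integrable_affine_indic (a b : R) (A : set T) : measurable A ->
  P.-integrable setT (EFin \o (fun x => a * \1_A x + b)).
Proof.
move=> mA; apply: integrable_EFinD => //; first exact: integrable_scaled_indic.
exact: finite_measure_integrable_cst.
Qed.

Lemma expect_scaled_indic (a : R) (A : set T) : measurable A ->
  expect P (fun x => a * \1_A x) = a * pr A.
Proof.
move=> mA; rewrite /expect RintegralZl //; last exact: integrable_indic.
by rewrite /Rintegral integral_indic // setIT.
Qed.

Lemma expect_affine_indic (a b : R) (A : set T) : measurable A ->
  expect P (fun x => a * \1_A x + b) = a * pr A + b.
Proof.
move=> mA; rewrite /expect RintegralD //; last 2 first.
- exact: integrable_scaled_indic.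
- exact: finite_measure_integrable_cst.
have PT : fine (P setT) = 1 by rewrite probability_setT.
by rewrite -/(expect _ _) expect_scaled_indic // Rintegral_cst // PT mulr1.
Qed.

Lemma expect_mul_affine_indic (a b c e : R) (A B : set T) :
  measurable A -> measurable B ->
  expect P (fun x => (a * \1_A x + b) * (c * \1_B x + e)) =
  a * c * pr (A `&` B) + a * e * pr A + b * c * pr B + b * e.
Proof.
move=> mA mB.
have -> : (fun x => (a * \1_A x + b) * (c * \1_B x + e)) =
    (fun x => a * c * \1_(A `&` B) x + (a * e * \1_A x + (b * c * \1_B x + b * e))).
  by apply/funext => x; rewrite indicI /=; ring.
have mAB := measurableI _ _ mA mB.
rewrite /expect RintegralD //; last 2 first.
- exact: integrable_scaled_indic.
- apply: integrable_EFinD => //; first exact: integrable_scaled_indic.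
  exact: integrable_affine_indic.
rewrite RintegralD //; last 2 first.
- exact: integrable_scaled_indic.
- exact: integrable_affine_indic.
rewrite -!/(expect _ _) expect_affine_indic // !expect_scaled_indic //.
by rewrite !addrA.
Qed.

Lemma pearson_affine_indic (a b c e : R) (A B : set T) :
  0 < a -> 0 < c -> measurable A -> measurable B ->
  pearson P (fun x => a * \1_A x + b) (fun x => c * \1_B x + e) =
  (pr (A `&` B) - pr A * pr B) /
    Num.sqrt (pr A * (1 - pr A) * (pr B * (1 - pr B))).
Proof.
move=> a0 c0 mA mB; rewrite /pearson !expect_affine_indic //.
have centered (k l m n : R) (C D : set T) :
    (fun x => (k * \1_C x + l - (k * pr C + l)) * (m * \1_D x + n - (m * pr D + n))) =
    (fun x => (k * \1_C x + - (k * pr C)) * (m * \1_D x + - (m * pr D))).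
  by apply/funext => x; ring.
have centered_sqr (k l : R) (C : set T) :
    (fun x => (k * \1_C x + l - (k * pr C + l)) ^+ 2) =
    (fun x => (k * \1_C x + - (k * pr C)) * (k * \1_C x + - (k * pr C))).
  by apply/funext => x; ring.
rewrite centered !centered_sqr !expect_mul_affine_indic // !setIid.
set pA := pr A; set pB := pr B; set pAB := pr (A `&` B).
have -> : a * c * pAB + a * - (c * pB) * pA + - (a * pA) * c * pB +
    - (a * pA) * - (c * pB) = (a * c) * (pAB - pA * pB) by ring.
have -> : (a * a * pA + a * - (a * pA) * pA + - (a * pA) * a * pA +
    - (a * pA) * - (a * pA)) * (c * c * pB + c * - (c * pB) * pB +
    - (c * pB) * c * pB + - (c * pB) * - (c * pB)) =
    (a * c) ^+ 2 * (pA * (1 - pA) * (pB * (1 - pB))) by ring.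
have ac0 : 0 < a * c by exact: mulr_gt0.
rewrite sqrtrM ?sqr_ge0 // sqrtr_sqr gtr0_norm // -mulf_div divff ?mul1r //.
exact: lt0r_neq0.
Qed.

Lemma cdf_scaled_indic (K : R) (A : set T) (z : T) : 0 < K -> measurable A ->
  Defs.cdf P (fun x => K * \1_A x) (K * \1_A z) = pr A * \1_A z + (1 - pr A).
Proof.
move=> K0 mA; rewrite /Defs.cdf indicE; case: (boolP (z \in A)) => zA /=.
- have -> : [set x | K * \1_A x <= K * 1] = setT.
    apply/seteqP; split => // x _ /=; rewrite mulr1 indicE.
    by case: (x \in A); rewrite /= ?mulr1 ?mulr0 // ltW.
  by rewrite probability_setT /=; ring.
- have -> : [set x | K * \1_A x <= K * 0] = ~` A.
    apply/seteqP; split => x /=; rewrite mulr0 indicE.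
      case: (boolP (x \in A)) => [_|/negP xA _ /mem_set //].
      by rewrite mulr1 leNgt K0.
    by move=> nAx; rewrite memNset // mulr0.
  rewrite probability_setC // -[P A]fineK ?fin_num_measure //=.
  by rewrite mulr0 add0r.
Qed.

Lemma spearman_scaled_indic (K M : R) (A B : set T) :
  0 < K -> 0 < M -> measurable A -> measurable B -> 0 < pr A -> 0 < pr B ->
  spearman P (fun x => K * \1_A x) (fun x => M * \1_B x) =
  (pr (A `&` B) - pr A * pr B) /
    Num.sqrt (pr A * (1 - pr A) * (pr B * (1 - pr B))).
Proof.
move=> K0 M0 mA mB pA0 pB0; rewrite /spearman.
under eq_fun do rewrite cdf_scaled_indic //.
under [X in pearson _ _ X]eq_fun do rewrite cdf_scaled_indic //.
exact: pearson_affine_indic.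
Qed.

End indicator_moments.

Section dirac_coupling.
Context d (T : measurableType d) (R : realType) (a : T) (Q : probability T R)
  (g : probability (T * T)%type R).
Hypotheses (ma : measurable [set a]) (gQ : coupling \d_a Q g).

Let mfst : measurable (fst @^-1` [set a] : set (T * T)%type).
Proof. by rewrite -setXT; exact: measurableX. Qed.

Lemma coupling_dirac_fst (C : set (T * T)%type) : measurable C ->
  g C = g (C `&` fst @^-1` [set a]).
Proof.
move=> mC; rewrite (measureDI _ mC mfst) [X in (X + _)%E](_ : _ = 0%E) ?add0e //.
have null : g (fst @^-1` (~` [set a])) = 0%E.
  by rewrite (gQ (measurableC ma)).1 /= diracE memNset //= => /(_ erefl).
apply/eqP; rewrite eq_le measure_ge0 andbT -null le_measure ?inE //.
- exact: measurableD.
- by rewrite -setXT; apply: measurableX => //; exact: measurableC.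
Qed.

Lemma coupling_diracE (C : set (T * T)%type) : measurable C ->
  g C = Q (xsection C a).
Proof.
move=> mC; have mS := measurable_xsection a mC.
have msnd : measurable (snd @^-1` xsection C a : set (T * T)%type).
  by rewrite -setTX; exact: measurableX.
rewrite coupling_dirac_fst // -(gQ mS).2 [RHS]coupling_dirac_fst //.
congr (g _); apply/seteqP; split => -[x y] [Cxy /= xa];
  by split => //; move: Cxy; rewrite xsectionE /= xa.
Qed.

End dirac_coupling.

Lemma coupling_product d (T : measurableType d) (R : realType)
    (P Q : probability T R) :
  coupling P Q (P \x Q)%E.
Proof.
move=> A mA; split.
- rewrite -setXT /= product_measure1E // -[RHS]mule1; congr (_ * _)%E.
  exact: probability_setT.
- rewrite -setTX /= product_measure1E // -[RHS]mul1e; congr (_ * _)%E.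
  exact: probability_setT.
Qed.

Definition discrete_dist {R : numDomainType} {T : eqType} (k : R) (x y : T) : R :=
  if x == y then 0 else k.

Lemma discrete_distE (R : numDomainType) (T : eqType) (k : R) (x y : T) :
  discrete_dist k x y = k * \1_(~` diagonal) (x, y).
Proof.
rewrite /discrete_dist indicE in_setC; case: eqVneq => [->|xy].
  by rewrite mem_set //= mulr0.
by rewrite memNset ?mulr1 //; exact/eqP.
Qed.

Section discrete_metric.
Context (R : realType) d (T : measurableType d).

Lemma discrete_dist_metric (k : R) : 0 < k -> is_metric (discrete_dist k : T -> T -> R).
Proof.
move=> k0; rewrite /discrete_dist; split.
- by move=> x y; case: eqP => // _; exact: ltW.
- move=> x y; split; last by move=> ->; rewrite eqxx.
  by case: eqP => // _ /eqP; rewrite gt_eqF.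
- by move=> x y; rewrite eq_sym.
- move=> x y z; case: (eqVneq x z) => [->|xz].
    by rewrite addr_ge0 //; case: eqP => // _; exact: ltW.
  case: (eqVneq x y) => [xy|_].
    by rewrite -xy (negbTE xz) add0r.
  by case: eqP => _; rewrite ?addr0 // lerDl ltW.
Qed.

Lemma dtilde_discrete_dist (alpha k : R) : 0 < alpha ->
  dtilde alpha (discrete_dist k : T -> T -> R) = discrete_dist (k `^ alpha).
Proof.
move=> a0; apply/funext => x; apply/funext => y; rewrite /dtilde /discrete_dist.
by case: eqP => // _; rewrite powR0 // gt_eqF.
Qed.

Lemma holder_discrete_dist_scaled_indic (alpha L0 k M : R) (E : set T) :
  0 < alpha -> 0 <= M <= L0 * k `^ alpha ->
  holder alpha L0 (discrete_dist k) (fun x => M * \1_E x).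
Proof.
move=> a0 /andP[M0 ML] x y; rewrite /discrete_dist.
case: eqP => [->|_]; first by rewrite subrr normr0 powR0 ?gt_eqF // mulr0.
apply: le_trans ML; rewrite -mulrBr normrM ger0_norm // ler_piMr //.
rewrite !indicE; case: (_ \in E); case: (_ \in E);
  by rewrite /= ?subrr ?normr0 ?subr0 ?sub0r ?normrN ?normr1.
Qed.

End discrete_metric.

Lemma wasserstein1_dirac_discrete_dist (R : realType) d (T : measurableType d)
    (a : T) (Q : probability T R) (K : R) :
  measurable [set a] -> measurable (~` diagonal : set (T * T)%type) ->
  wasserstein1 (discrete_dist K) \d_a Q = (K%:E * Q (~` [set a]))%E.
Proof.
move=> ma mD; rewrite /wasserstein1.
suff -> : [set (\int[g]_z ((discrete_dist K z.1 z.2)%:E))%E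
    | g in [set g : probability (T * T)%type R | coupling \d_a Q g]] =
    [set (K%:E * Q (~` [set a]))%E] by rewrite ereal_inf1.
have xsD : xsection (~` diagonal) a = ~` [set a].
  by apply/seteqP; split => y; rewrite xsectionE /= => yna ?; apply: yna.
have cost g : coupling \d_a Q g ->
    (\int[g]_z ((discrete_dist K z.1 z.2)%:E) = K%:E * Q (~` [set a]))%E.
  move=> gQ; under eq_integral do rewrite discrete_distE -surjective_pairing EFinM.
  rewrite integralZl //; last exact: integrable_indic.
  rewrite integral_indic // setIT -xsD; congr (_ * _)%E.
  exact: coupling_diracE.
apply/seteqP; split => [_ [g gQ <-]|_ ->]; first exact: cost.
by exists (\d_a \x Q)%E; [exact: coupling_product|exact/cost/coupling_product].
Qed.

Definition separated_by {T : Type} (E : set T) : set (T * T) :=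
  (E `*` ~` E) `|` (~` E `*` E).

Lemma separated_by_sub_offdiag (T : Type) (E : set T) :
  separated_by E `<=` ~` diagonal.
Proof.
move=> [x y] /= [[Ex nEy]|[nEx Ey]] xy; first by apply: nEy; rewrite -xy.
by apply: nEx; rewrite xy.
Qed.

Lemma normrB_scaled_indic (R : realDomainType) (T : Type) (M : R) (E : set T) x y :
  0 <= M -> `|M * \1_E x - M * \1_E y| = M * \1_(separated_by E) (x, y).
Proof.
move=> M0; rewrite -mulrBr normrM ger0_norm //; congr (M * _).
rewrite !indicE /separated_by in_setU !in_setX !in_setC /=.
by case: (x \in E); case: (y \in E);
  rewrite /= ?subrr ?normr0 ?subr0 ?sub0r ?normrN ?normr1.
Qed.

Lemma product_measure_separated_by d (T : measurableType d) (R : realType)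
    (P : probability T R) (E : set T) : measurable E ->
  (P \x P)%E (separated_by E) = (2 * fine (P E) * (1 - fine (P E)))%:E.
Proof.
move=> mE; have mCE := measurableC mE.
rewrite /separated_by measureU /=; last 3 first.
- exact: measurableX.
- exact: measurableX.
- by apply/seteqP; split => // -[x y] [[/= ? _] [/= ? _]].
have PE : P E = (fine (P E))%:E by rewrite fineK ?fin_num_measure.
have PC : P (~` E) = (1 - fine (P E))%:E by rewrite probability_setC // PE.
rewrite !product_measure1E //; transitivity
  ((fine (P E))%:E * (1 - fine (P E))%:E + (1 - fine (P E))%:E * (fine (P E))%:E)%E.
  by congr (_ * _ + _ * _)%E; [exact: PE|exact: PC|exact: PC|exact: PE].
by rewrite -!EFinM -EFinD; congr EFin; ring.
Qed.

Section metric_freedom_indicator.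
Context (R : realType) d (T : measurableType d) (P : probability T R) (E : set T).
Hypotheses (mE : measurable E) (mD : measurable (~` diagonal : set (T * T)%type)).
Local Notation pU := (fine ((P \x P)%E (~` diagonal))).
Local Notation pV := (2 * fine (P E) * (1 - fine (P E))).

Lemma metric_freedom_discrete_dist_indic (alpha k M : R) :
  0 < alpha -> 0 < k -> 0 < M -> 0 < pU -> 0 < pV ->
  metric_freedom alpha (discrete_dist k) (fun x => M * \1_E x) P =
  1 - pV * (1 - pU) / Num.sqrt (pU * (1 - pU) * (pV * (1 - pV))).
Proof.
move=> a0 k0 M0 pU0 pV0; rewrite /metric_freedom dtilde_discrete_dist //.
under eq_fun do rewrite discrete_distE -surjective_pairing.
under [X in spearman _ _ X]eq_fun do
  rewrite normrB_scaled_indic ?ltW // -surjective_pairing.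
have mS : measurable (separated_by E).
  by apply: measurableU; apply: measurableX => //; exact: measurableC.
have pS : fine ((P \x P)%E (separated_by E)) = pV.
  by rewrite product_measure_separated_by.
rewrite spearman_scaled_indic ?powR_gt0 //; last by rewrite pS.
by rewrite setIidr ?pS; [congr (1 - _ / _); ring | exact: separated_by_sub_offdiag].
Qed.

End metric_freedom_indicator.

Lemma poly_root_itv (R : realType) (p : {poly R}) (a b : R) :
  a <= b -> p.[a] < 0 <= p.[b] -> exists2 c, a < c <= b & p.[c] = 0.
Proof.
move=> ab /andP[pa pb].
have [||c] := @IVT R (horner p) a b 0 ab.
- exact/continuous_subspaceT/continuous_horner.
- by rewrite ge_min le_max ltW //= pb orbT.
rewrite in_itv /= => /andP[ac cb] pc; exists c => //.
by rewrite cb andbT lt_neqAle ac andbT; apply: contraTneq pa => ->; rewrite pc ltxx.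
Qed.

Lemma div_sqrt_eq (R : rcfType) (x y r : R) :
  0 < x -> 0 < r -> x ^+ 2 = r ^+ 2 * y -> x / Num.sqrt y = r.
Proof.
move=> x0 r0 xy; have -> : y = (x / r) ^+ 2.
  by rewrite expr_div_n xy; field; rewrite gt_eqF.
by rewrite sqrtr_sqr gtr0_norm ?divr_gt0 // invf_div mulrC divfK // gt_eqF.
Qed.

Section bool2_model.
Context (R : realType).
Local Notation X := (bool * bool)%type.

Definition bool2_enum : seq X :=
  [:: (true, true); (true, false); (false, true); (false, false)].

Lemma mem_bool2_enum (x : X) : x \in bool2_enum.
Proof. by case: x => [[] []]. Qed.

Lemma measurable_bool2 (A : set X) : measurable A.
Proof.
apply: (measurable_enum mem_bool2_enum) => -[b1 b2].
exact: measurable_set1_pair.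
Qed.

Lemma measurable_bool2_pair (A : set (X * X)) : measurable A.
Proof.
apply: (@measurable_enum _ _ [seq (x, y) | x <- bool2_enum, y <- bool2_enum]).
- by move=> [x y]; apply: allpairs_f; exact: mem_bool2_enum.
- by move=> [x y]; apply: measurable_set1_pair; exact: measurable_bool2.
Qed.

Definition bool2_prob (q : R) : probability X R :=
  (bernoulli_prob q \x bernoulli_prob 2^-1)%E.

(* For P0 = Bernoulli(q) (x) Bernoulli(1/2) on bool * bool: the probability
   that two independent draws coincide, and that exactly one of them is
   (true, true). *)
Definition bool2_collision (q : R) := (q ^+ 2 + (1 - q) ^+ 2) / 2.
Definition bool2_separation (q : R) := q * (1 - q / 2).

(* Exactly the condition under which the Spearman correlation in
   [bool2_metric_freedom] equals [r]. *)
Lemma exists_bool2_parameter (r : R) : 0 < r <= 1 ->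
  exists2 q, 0 < q <= 1 &
    bool2_separation q * bool2_collision q =
    r ^+ 2 * (1 - bool2_collision q) * (1 - bool2_separation q).
Proof.
move=> /andP[r0 r1].
pose c : {poly R} := ('X ^+ 2 + (1 - 'X) ^+ 2) * (2^-1)%:P.
pose v : {poly R} := 'X * (1 - 'X * (2^-1)%:P).
pose h := v * c - (r ^+ 2)%:P * (1 - c) * (1 - v).
have hE x : h.[x] = bool2_separation x * bool2_collision x -
    r ^+ 2 * (1 - bool2_collision x) * (1 - bool2_separation x).
  by rewrite /h /v /c /bool2_separation /bool2_collision !hornerE.
have h01 : h.[0] < 0 <= h.[1].
  rewrite !hE /bool2_separation /bool2_collision.
  apply/andP; split; first by nra.
  by rewrite subr_ge0; nra.
have [q q01 hq0] := poly_root_itv ler01 h01.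
by exists q => //; apply/eqP; rewrite -subr_eq0 -hE hq0.
Qed.

Variable q : R.
Hypothesis q01 : 0 < q <= 1.

Let q01' : 0 <= q <= 1.
Proof. by case/andP: q01 => /ltW -> ->. Qed.

Let half01 : 0 <= (2^-1 : R) <= 1.
Proof. by rewrite invr_ge0 ler0n invf_le1 ?ler1n. Qed.

Lemma bool2_prob_set1 (x : X) :
  bool2_prob q [set x] = (bernoulli_pmf q x.1 * bernoulli_pmf 2^-1 x.2)%:E.
Proof.
case: x => b1 b2; rewrite /bool2_prob /= product_measure_set1 //.
by rewrite /= !bernoulli_prob_set1.
Qed.

Lemma bool2_prob_offdiag :
  fine ((bool2_prob q \x bool2_prob q)%E (~` diagonal)) = 1 - bool2_collision q.
Proof.
rewrite product_probability_setC; last exact: measurable_bool2_pair.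
rewrite (product_measure_diagonal mem_bool2_enum) //; last first.
  by move=> x; exact: measurable_bool2.
rewrite /bool2_enum !big_cons big_nil !bool2_prob_set1 /= /bool2_collision.
by field.
Qed.

Let prob_top : fine (bool2_prob q [set (true, true)]) = q / 2.
Proof. by rewrite bool2_prob_set1. Qed.

Lemma bool2_metric_freedom (alpha k M r : R) :
  0 < alpha -> 0 < k -> 0 < M -> 0 < r ->
  bool2_separation q * bool2_collision q =
    r ^+ 2 * (1 - bool2_collision q) * (1 - bool2_separation q) ->
  metric_freedom alpha (discrete_dist k) (fun x => M * \1_[set (true, true)] x)
    (bool2_prob q) = 1 - r.
Proof.
move=> a0 k0 M0 r0 hr; case/andP: q01 => q0 q1.
have sepE : 2 * (q / 2) * (1 - q / 2) = bool2_separation q.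
  by rewrite /bool2_separation; field.
have sep0 : 0 < bool2_separation q by rewrite /bool2_separation; nra.
have coll1 : bool2_collision q < 1 by rewrite /bool2_collision; nra.
rewrite metric_freedom_discrete_dist_indic ?bool2_prob_offdiag ?prob_top ?sepE
  ?subr_gt0 //; last 2 first.
- exact: measurable_bool2.
- exact: measurable_bool2_pair.
congr (1 - _); apply: div_sqrt_eq => //.
  by rewrite subKr; apply: mulr_gt0 => //; rewrite /bool2_collision; nra.
by rewrite subKr expr2 {1}hr; ring.
Qed.

Lemma bool2_wasserstein1 (K : R) :
  wasserstein1 (discrete_dist K) \d_(true, true) (bool2_prob q) =
  (K * (1 - q / 2))%:E.
Proof.
rewrite wasserstein1_dirac_discrete_dist; last 2 first.
- exact: measurable_bool2.
- exact: measurable_bool2_pair.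
by rewrite probability_setC ?bool2_prob_set1 //; exact: measurable_bool2.
Qed.

Lemma bool2_skill_lift (M : R) :
  skill_lift (fun x => M * \1_[set (true, true)] x) \d_(true, true) (bool2_prob q) =
  M * (1 - q / 2).
Proof.
rewrite /skill_lift !expect_scaled_indic ?prob_top; try exact: measurable_bool2.
have dtop : \d_(true, true) [set (true, true)] = 1%E :> \bar R.
  by rewrite diracE mem_set.
by rewrite [fine _](congr1 fine dtop) /=; ring.
Qed.

End bool2_model.

Theorem theorem2 (R : realType) (F alpha L0 W : R) :
  0 <= F < 1 -> 0 < alpha <= 1 -> 0 < L0 -> 0 < W ->
  exists (dX : measure_display) (X : measurableType dX)
         (dist : X -> X -> R) (s : X -> R) (P0 Ppi : probability X R),
    is_metric dist /\
        measurable_fun setT (fun z : X * X => dist z.1 z.2) /\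
        measurable_fun setT s /\
        holder alpha L0 dist s /\
        P0.-integrable setT (EFin \o s) /\
        Ppi.-integrable setT (EFin \o s) /\
        metric_freedom alpha dist s P0 = F /\
        wasserstein1 (dtilde alpha dist) Ppi P0 = W%:E /\
        skill_lift s Ppi P0 >= 2^-1 * L0 * (1 - F) * W.
Proof.
move=> /andP[F0 F1] /andP[a0 _] L00 W0.
have r0 : 0 < 1 - F by lra.
have r01 : 0 < 1 - F <= 1 by apply/andP; split; lra.
have [q q01 hq] := exists_bool2_parameter r01.
have off_top0 : 0 < 1 - q / 2 by case/andP: q01 => _ q1; lra.
pose K := W / (1 - q / 2); pose M := L0 * K; pose k := K `^ alpha^-1.
have K0 : 0 < K by exact: divr_gt0.
have kK : k `^ alpha = K by rewrite -powRrM mulVf ?gt_eqF // powRr1 // ltW.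
have k0 : 0 < k by exact: powR_gt0.
have M0 : 0 < M by exact: mulr_gt0.
exists _, (bool * bool)%type, (discrete_dist k),
  (fun x => M * \1_[set (true, true)] x), (bool2_prob q), \d_(true, true).
split; first exact: discrete_dist_metric.
split; first by move=> _ Y _; exact: measurable_bool2_pair.
split; first by move=> _ Y _; exact: measurable_bool2.
split.
  by apply: holder_discrete_dist_scaled_indic; rewrite // kK lexx andbT ltW.
split; first by apply: integrable_scaled_indic; exact: measurable_bool2.
split; first by apply: integrable_scaled_indic; exact: measurable_bool2.
split; first by rewrite (bool2_metric_freedom q01 a0 k0 M0 r0 hq); ring.
split.
  rewrite dtilde_discrete_dist // kK (bool2_wasserstein1 q01) /K.
  by congr EFin; field; apply: lt0r_neq0; lra.
rewrite (bool2_skill_lift q01).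
have -> : M * (1 - q / 2) = L0 * W by rewrite /M /K; field; apply: lt0r_neq0; lra.
have LW : 0 < L0 * W by exact: mulr_gt0.
nra.
Qed.
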